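(* Let $(X,d,\delta)$ be a dilation structure over $\Gamma$, let $A>1$ and $d^{x}$ be as in axiom A2, and let $x\in X$. For $\varepsilon\in\Gamma$ put $\delta^{x}_{\varepsilon}d(u,v)=\frac{1}{|\varepsilon|}d(\delta^{x}_{\varepsilon}u,\delta^{x}_{\varepsilon}v)$. Then for every $\mu\in Abs(\Gamma)$ the net of metric spaces $(\bar B_{d}(x,A),\delta^{x}_{\varepsilon}d)$ converges, as $\varepsilon\to\mu$, in the Gromov–Hausdorff sense to the metric space $(\bar B_{d}(x,A),d^{x})$. Moreover this limit space is a metric cone: for every $\lambda\in\Gamma$, $d^{x}(\delta^{x}_{\lambda}u,\delta^{x}_{\lambda}v)=|\lambda|\,d^{x}(u,v)$.
   Context: $\Gamma$ is a separable topological commutative group with an absolute $Abs(\Gamma)$ (a class of filters $\mu:\{\text{open sets of }\Gamma\}\to\{0,1\}$, each with $\mu(\Gamma)=1$, monotone, and $\mu(A\cup B)+\mu(A\cap B)\ge\mu(A)+\mu(B)$; such that (i) for each $\varepsilon\in\Gamma$ some open $A$ and $\mu$ satisfy $\mu(A)=1$, $\varepsilon\notin A$; (ii) distinct $\mu,\mu'$ are separated by some open $A$ with $\mu(A)>\mu'(A)$; (iii) the class is invariant under transport by elements of $\Gamma$), and $\lim_{\varepsilon\to\mu}f(\varepsilon)=z$ means $\mu(f^{-1}(A))=1$ for all open $A\ni z$. Moreover $|\cdot|:\Gamma\to(0,+\infty)$ is a morphism with $\lim_{\varepsilon\to\mu}|\varepsilon|=0$ for all $\mu\in Abs(\Gamma)$.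 A dilation structure $(X,d,\delta)$ (domains of dilations being ignored, as in the paper): $(X,d)$ is a locally compact metric space and $\delta^{x}_{\varepsilon}y$ ($\varepsilon\in\Gamma$, $x,y\in X$) is such that $x\circ_{\varepsilon}y=\delta^{x}_{\varepsilon}y$ makes $X$ a $\Gamma$-uniform irq, namely: each $(X,\circ_\varepsilon)$ is an idempotent right quasigroup ($x\circ_\varepsilon x=x$, $z\mapsto x\circ_\varepsilon z$ bijective with inverse $x\bullet_\varepsilon\cdot$), $x\circ_{\varepsilon}(x\circ_{\mu}y)=x\circ_{\varepsilon\mu}y$, operations continuous, $X$ separable, and (C) for each $x$, compact $K$, open $U\ni x$ there is an open $A\subset\Gamma$ with $\mu(A)=1$ for all $\mu\in Abs(\Gamma)$ and $x\circ_\varepsilon u\in U$ for $u\in K,\varepsilon\in A$; (D) the limits as $\varepsilon\to\mu$ of $(x\circ_{\varepsilon}u)\bullet_{\varepsilon}(x\circ_{\varepsilon}v)$ and of $x\bullet_{\varepsilon}((x\circ_{\varepsilon}u)\circ_{\varepsilon}v)$ exist uniformly for $x,u,v$ in compact sets. In addition: (A1) the uniformity of the irq is the one induced by $d$; (A2) there is $A>1$ such that for every $x$ there is a function $d^{x}(u,v)$, defined for $u,v\in\bar B_{d}(x,A)$, with $\lim_{\varepsilon\to\mu}\sup\{|\frac{1}{|\varepsilon|}d(\delta^{x}_{\varepsilon}u,\delta^{x}_{\varepsilon}v)-d^{x}(u,v)|: u,v\in\bar B_{d}(x,A)\}=0$ for every $\mu\in Abs(\Gamma)$, uniformly for $x$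 in compact sets, and the uniformity induced by $d^{x}$ equals that induced by $d$ (in particular $d^{x}(u,v)=0$ implies $u=v$). *)

From HB Require Import structures.
From mathcomp Require Import all_boot all_order all_algebra.
From mathcomp Require Import all_classical all_reals all_analysis.
Set Implicit Arguments. Unset Strict Implicit. Unset Printing Implicit Defensive.
Import Order.TTheory GRing.Theory Num.Theory numFieldNormedType.Exports.
Local Open Scope classical_set_scope.
Local Open Scope ring_scope.

Definition separable_space (T : topologicalType) :=
  exists D : set T, countable D /\ closure D = setT.

Definition comm_topgroup (G : topologicalType)
  (mul : G -> G -> G) (one : G) (inv : G -> G) : Prop :=
  [/\ (forall a b c, mul a (mul b c) = mul (mul a b) c),
      (forall a b, mul a b = mul b a),
      (forall a, mul one a = a),
      (forall a, mul (inv a) a = one) &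
      (continuous (fun p : G * G => mul p.1 p.2) /\ continuous inv)].

(* A filter on the open sets of Gamma, with values in {0,1} = bool.
   Only the values of mu on open sets are meaningful. *)
Definition abs_filter (G : topologicalType) (mu : set G -> bool) : Prop :=
  [/\ mu setT,
      ~~ mu set0,
      (forall A B : set G, open A -> open B -> A `<=` B -> mu A -> mu B) &
      (forall A B : set G, open A -> open B ->
          (mu A + mu B <= mu (A `|` B) + mu (A `&` B))%N)].

(* lim_{eps -> mu} f eps = z : every open neighbourhood of z has a preimage
   containing an open set of mu-measure 1 (equal to "mu (f^-1 U) = 1" when
   that preimage is open, by monotonicity). *)
Definition abs_lim (G : topologicalType) (T : topologicalType)
  (mu : set G -> bool) (f : G -> T) (z : T) : Prop :=
  forall U : set T, open U -> U z ->
    exists O : set G, [/\ open O, mu O & O `<=` f @^-1` U].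

Definition absolute (G : topologicalType) (mul : G -> G -> G)
  (Abs : set (set G -> bool)) : Prop :=
  [/\ (forall mu, Abs mu -> abs_filter mu),
      (forall eps : G, exists A : set G, exists mu,
          [/\ open A, Abs mu, mu A & ~ A eps]),
      (forall mu mu', Abs mu -> Abs mu' ->
          (exists A : set G, open A /\ mu A <> mu' A) ->
          exists A : set G, [/\ open A, mu A & ~~ mu' A]) &
      (forall mu (g : G), Abs mu ->
          exists mu', Abs mu' /\
            forall A : set G, open A -> mu' A = mu ((mul g) @` A))].

Definition abs_morphism (R : realType) (G : topologicalType)
  (mul : G -> G -> G) (Abs : set (set G -> bool)) (nrm : G -> R) : Prop :=
  [/\ (forall a, 0 < nrm a),
      (forall a b, nrm (mul a b) = nrm a * nrm b) &
      (forall mu, Abs mu -> abs_lim mu nrm 0)].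

Definition metric_of (R : realType) (X : pseudoMetricType R)
  (d : X -> X -> R) : Prop :=
  [/\ (forall x y, d x y = 0 <-> x = y),
      (forall x y, d x y = d y x),
      (forall x y z, d x z <= d x y + d y z) &
      (* the pseudometric structure of X is the one induced by d (A1) *)
      (forall (x : X) (e : R), 0 < e -> ball x e = [set y | d x y < e])].

Definition cball (R : realType) (X : Type) (d : X -> X -> R) (x : X) (r : R)
  : set X := [set y | d x y <= r].

(* Gamma-uniform idempotent right quasigroup x o_eps y = delta eps x y,
   with inverse x bullet_eps y = deltainv eps x y. *)
Definition gamma_uniform_irq (R : realType) (G : topologicalType)
  (mul : G -> G -> G) (Abs : set (set G -> bool))
  (X : pseudoMetricType R) (d : X -> X -> R)
  (delta deltainv : G -> X -> X -> X) : Prop :=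
  [/\ (forall eps x, delta eps x x = x),
      (forall eps x y, deltainv eps x (delta eps x y) = y),
      (forall eps x y, delta eps x (deltainv eps x y) = y),
      (forall eps m x y, delta eps x (delta m x y) = delta (mul eps m) x y) &
   [/\ continuous (fun p : G * X * X => delta p.1.1 p.1.2 p.2),
      continuous (fun p : G * X * X => deltainv p.1.1 p.1.2 p.2),
      separable_space X,
      (forall (x : X) (K U : set X), compact K -> open U -> U x ->
          exists O : set G, [/\ open O, (forall mu, Abs mu -> mu O) &
             forall eps u, O eps -> K u -> U (delta eps x u)]) &
      (forall mu, Abs mu -> exists F1 F2 : X -> X -> X -> X,
          forall K : set X, compact K -> forall e : R, 0 < e ->
          exists O : set G, [/\ open O, mu O &
            forall eps x u v, O eps -> K x -> K u -> K v ->
              d (F1 x u v) (deltainv eps (delta eps x u) (delta eps x v)) < e /\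
              d (F2 x u v) (deltainv eps x (delta eps (delta eps x u) v)) < e])]].

(* Dilation structure (X,d,delta) over Gamma (domains ignored). *)
Definition dilation_structure (R : realType) (G : topologicalType)
  (mul : G -> G -> G) (one : G) (inv : G -> G)
  (Abs : set (set G -> bool)) (nrm : G -> R)
  (X : pseudoMetricType R) (d : X -> X -> R)
  (delta deltainv : G -> X -> X -> X) : Prop :=
  [/\ comm_topgroup mul one inv, separable_space G, absolute mul Abs,
      abs_morphism mul Abs nrm &
   [/\ metric_of d, locally_compact [set: X] &
      gamma_uniform_irq mul Abs d delta deltainv]].

Definition axiom_A2 (R : realType) (G : topologicalType)
  (Abs : set (set G -> bool)) (nrm : G -> R)
  (X : pseudoMetricType R) (d : X -> X -> R)
  (delta : G -> X -> X -> X) (A : R) (dx : X -> X -> X -> R) : Prop :=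
  [/\ 1 < A,
      (forall mu, Abs mu -> forall K : set X, compact K ->
        forall e : R, 0 < e -> exists O : set G, [/\ open O, mu O &
          forall eps x u v, O eps -> K x -> cball d x A u -> cball d x A v ->
            `| d (delta eps x u) (delta eps x v) / nrm eps - dx x u v | < e]) &
      (forall x : X,
        (forall e : R, 0 < e -> exists e' : R, 0 < e' /\
           forall u v, cball d x A u -> cball d x A v ->
             d u v < e' -> `| dx x u v | < e) /\
        (forall e : R, 0 < e -> exists e' : R, 0 < e' /\
           forall u v, cball d x A u -> cball d x A v ->
             `| dx x u v | < e' -> d u v < e))].

(* Gromov-Hausdorff distance: d_GH((P1,d1),(P2,d2)) < r iff there is a
   (semi-)metric D on the disjoint union P1 + P2 extending d1 and d2 for
   which the Hausdorff distance between P1 and P2 is < r.             *)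

Definition in_union (T1 T2 : Type) (P1 : set T1) (P2 : set T2)
  (z : T1 + T2) : Prop :=
  match z with inl a => P1 a | inr b => P2 b end.

Definition admissible_union_metric (R : realType) (T1 T2 : Type)
  (P1 : set T1) (d1 : T1 -> T1 -> R) (P2 : set T2) (d2 : T2 -> T2 -> R)
  (D : T1 + T2 -> T1 + T2 -> R) : Prop :=
  [/\ (forall z, in_union P1 P2 z -> D z z = 0),
      (forall z w, in_union P1 P2 z -> in_union P1 P2 w -> D z w = D w z),
      (forall z w t, in_union P1 P2 z -> in_union P1 P2 w ->
          in_union P1 P2 t -> D z t <= D z w + D w t),
      (forall a b, P1 a -> P1 b -> D (inl a) (inl b) = d1 a b) &
      (forall a b, P2 a -> P2 b -> D (inr a) (inr b) = d2 a b)].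

Definition GH_dist_lt (R : realType) (T1 T2 : Type)
  (P1 : set T1) (d1 : T1 -> T1 -> R) (P2 : set T2) (d2 : T2 -> T2 -> R)
  (r : R) : Prop :=
  exists D : T1 + T2 -> T1 + T2 -> R,
    admissible_union_metric P1 d1 P2 d2 D /\
    exists s : R, s < r /\
      (forall a, P1 a -> exists b, P2 b /\ D (inl a) (inr b) < s) /\
      (forall b, P2 b -> exists a, P1 a /\ D (inl a) (inr b) < s).

Definition GH_converges (R : realType) (G : topologicalType)
  (mu : set G -> bool) (T T0 : Type) (P : set T) (dn : G -> T -> T -> R)
  (P0 : set T0) (d0 : T0 -> T0 -> R) : Prop :=
  forall r : R, 0 < r -> exists O : set G, [/\ open O, mu O &
    forall eps, O eps -> GH_dist_lt P (dn eps) P0 d0 r].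

Definition rescaled_dist (R : realType) (G : Type) (nrm : G -> R)
  (X : Type) (d : X -> X -> R) (delta : G -> X -> X -> X) (x : X)
  (eps : G) : X -> X -> R :=
  fun u v => d (delta eps x u) (delta eps x v) / nrm eps.

(* By A2 the rescaled distances converge to d^x uniformly on the closed ball.
   Two semimetrics on one set that are uniformly e-close are at
   Gromov-Hausdorff distance at most 2e: glue the two copies along the
   identity correspondence.  This gives the convergence, and it also shows
   that d^x, a uniform limit of semimetrics, is a semimetric.
   For the cone property, the dilation law gives
   delta^x_eps d (delta^x_lam u, delta^x_lam v) = |lam| delta^x_(eps lam) d (u, v);
   taking eps along some mu in Abs(Gamma) and eps lam along the transport of
   mu by lam^-1, both sides converge, to d^x (delta^x_lam u, delta^x_lam v)
   and to |lam| d^x (u, v) respectively. *)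
From HB Require Import structures.
From mathcomp Require Import all_boot all_order all_algebra.
From mathcomp Require Import all_classical all_reals all_analysis.
From mathcomp Require Import ring lra.
Import Order.TTheory GRing.Theory Num.Theory numFieldNormedType.Exports.
Local Open Scope classical_set_scope.
Local Open Scope ring_scope.
Set Implicit Arguments.

Definition semimetric_on {R : numDomainType} {T : Type} (P : set T)
  (d : T -> T -> R) : Prop :=
  [/\ forall a, P a -> d a a = 0,
      forall a b, P a -> P b -> d a b = d b a &
      forall a b c, P a -> P b -> P c -> d a c <= d a b + d b c].

Lemma semimetric_ge0 (R : numDomainType) (T : Type) (P : set T)
  (d : T -> T -> R) a b :
  semimetric_on P d -> P a -> P b -> 0 <= d a b.
Proof.
move=> [d0 dC dtri] Pa Pb; have := dtri _ _ _ Pa Pb Pa.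
by rewrite d0 // (dC b a) // -mulr2n pmulrn_lge0.
Qed.

Section Gluing.
Variables (R : realType) (T : Type) (P : set T) (d1 d2 : T -> T -> R) (e : R).
Hypothesis e_gt0 : 0 < e.
Hypothesis d1_semi : semimetric_on P d1.
Hypothesis d2_semi : semimetric_on P d2.
Hypothesis d12_close : forall a b, P a -> P b -> `|d1 a b - d2 a b| <= e.

Let d1_0 : forall a, P a -> d1 a a = 0. Proof. by case: d1_semi. Qed.
Let d2_0 : forall a, P a -> d2 a a = 0. Proof. by case: d2_semi. Qed.
Let d1C : forall a b, P a -> P b -> d1 a b = d1 b a.
Proof. by case: d1_semi. Qed.
Let d2C : forall a b, P a -> P b -> d2 a b = d2 b a.
Proof. by case: d2_semi. Qed.
Let d1_tri : forall a b c, P a -> P b -> P c -> d1 a c <= d1 a b + d1 b c.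
Proof. by case: d1_semi. Qed.
Let d2_tri : forall a b c, P a -> P b -> P c -> d2 a c <= d2 a b + d2 b c.
Proof. by case: d2_semi. Qed.

Let d1_le a b : P a -> P b -> d1 a b <= d2 a b + e.
Proof. by move=> Pa Pb; have := d12_close Pa Pb; rewrite ler_norml; lra. Qed.

Let d2_le a b : P a -> P b -> d2 a b <= d1 a b + e.
Proof. by move=> Pa Pb; have := d12_close Pa Pb; rewrite ler_norml; lra. Qed.

Definition glue_inf a b := inf [set d1 a c + d2 c b | c in P].

Lemma glue_inf_le a b c : P a -> P b -> P c -> glue_inf a b <= d1 a c + d2 c b.
Proof.
move=> Pa Pb Pc; apply: ge_inf; last by exists c.
exists 0 => _ [c' Pc' <-].
by apply: addr_ge0;
  [exact: semimetric_ge0 d1_semi _ _ | exact: semimetric_ge0 d2_semi _ _].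
Qed.

Lemma glue_inf_ge a b y :
  P b -> (forall c, P c -> y <= d1 a c + d2 c b) -> y <= glue_inf a b.
Proof.
move=> Pb ley; apply: lb_le_inf; first by exists (d1 a b + d2 b b), b.
by move=> _ [c Pc <-]; exact: ley.
Qed.

(* The copies are joined through every intermediate point c; the extra e is
   what makes the triangle inequality through the other copy hold. *)
Definition glue_dist (z w : T + T) : R :=
  match z, w with
  | inl a, inl b => d1 a b
  | inr a, inr b => d2 a b
  | inl a, inr b => e + glue_inf a b
  | inr b, inl a => e + glue_inf a b
  end.

Lemma glue_inf_le_l a a' b :
  P a -> P a' -> P b -> glue_inf a b <= d1 a a' + glue_inf a' b.
Proof.
move=> Pa Pa' Pb; rewrite -lerBlDl; apply: glue_inf_ge => // c Pc.
rewrite lerBlDl; apply: le_trans (glue_inf_le Pa Pb Pc) _.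
by rewrite addrA lerD2r d1_tri.
Qed.

Lemma glue_inf_le_r a b b' :
  P a -> P b -> P b' -> glue_inf a b' <= glue_inf a b + d2 b b'.
Proof.
move=> Pa Pb Pb'; rewrite -lerBlDr; apply: glue_inf_ge => // c Pc.
rewrite lerBlDr; apply: le_trans (glue_inf_le Pa Pb' Pc) _.
by rewrite -addrA lerD2l d2_tri.
Qed.

Lemma glue_tri_left a a' b : P a -> P a' -> P b ->
  d1 a a' <= (e + glue_inf a b) + (e + glue_inf a' b).
Proof.
move=> Pa Pa' Pb.
suff: d1 a a' - 2 * e - glue_inf a' b <= glue_inf a b by lra.
apply: glue_inf_ge => // c Pc.
suff: d1 a a' - 2 * e - (d1 a c + d2 c b) <= glue_inf a' b by lra.
apply: glue_inf_ge => // c' Pc'.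
have := d1_tri Pa Pc Pa'; have := d1_tri Pc Pc' Pa'; have := d1_le Pc Pc'.
have := d2_tri Pc Pb Pc'; rewrite (d1C Pc' Pa') (d2C Pb Pc'); have := e_gt0; lra.
Qed.

Lemma glue_tri_right a b b' : P a -> P b -> P b' ->
  d2 b b' <= (e + glue_inf a b) + (e + glue_inf a b').
Proof.
move=> Pa Pb Pb'.
suff: d2 b b' - 2 * e - glue_inf a b' <= glue_inf a b by lra.
apply: glue_inf_ge => // c Pc.
suff: d2 b b' - 2 * e - (d1 a c + d2 c b) <= glue_inf a b' by lra.
apply: glue_inf_ge => // c' Pc'.
have := d2_tri Pb Pc Pb'; have := d2_tri Pc Pc' Pb'; have := d2_le Pc Pc'.
have := d1_tri Pc Pa Pc'; rewrite (d2C Pb Pc) (d1C Pc Pa); have := e_gt0; lra.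
Qed.

Lemma glue_dist_admissible : admissible_union_metric P d1 P d2 glue_dist.
Proof.
split=> //.
- by case=> a /= Pa; [exact: d1_0 | exact: d2_0].
- by case=> a [] b /= Pa Pb //; [exact: d1C | exact: d2C].
- case=> a [] b [] c /= Pa Pb Pc.
  + exact: d1_tri.
  + by have := glue_inf_le_l Pa Pb Pc; lra.
  + exact: glue_tri_left.
  + by have := glue_inf_le_r Pa Pb Pc; lra.
  + by have := glue_inf_le_l Pc Pb Pa; rewrite (d1C Pb Pc); lra.
  + exact: glue_tri_right.
  + by have := glue_inf_le_r Pc Pb Pa; rewrite (d2C Pa Pb); lra.
  + exact: d2_tri.
Qed.

Lemma glue_dist_diag a : P a -> glue_dist (inl a) (inr a) < 2 * e.
Proof.
move=> Pa /=; have := glue_inf_le Pa Pa Pa.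
by rewrite d1_0 // d2_0 //; have := e_gt0; lra.
Qed.

Lemma GH_dist_lt_close r : 2 * e < r -> GH_dist_lt P d1 P d2 r.
Proof.
move=> er; exists glue_dist; split; first exact: glue_dist_admissible.
exists (2 * e); split=> //.
by split=> a Pa; exists a; split=> //; exact: glue_dist_diag.
Qed.

End Gluing.

Lemma semimetric_on_uniform_limit (R : realType) (I T : Type) (P : set T)
  (dn : I -> T -> T -> R) (d0 : T -> T -> R) :
  (forall i, semimetric_on P (dn i)) ->
  (forall e : R, 0 < e ->
     exists i, forall u v, P u -> P v -> `|dn i u v - d0 u v| < e) ->
  semimetric_on P d0.
Proof.
move=> dn_semi dn_approx; split.
- move=> a Pa; apply/eqP; rewrite -normr_eq0 eq_le normr_ge0 andbT.
  apply/ler_addgt0Pr => e e0; have [i approx] := dn_approx _ e0.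
  have [dn0 _ _] := dn_semi i.
  by have := approx _ _ Pa Pa; rewrite dn0 // sub0r normrN add0r => /ltW.
- move=> a b Pa Pb; apply/eqP; rewrite -subr_eq0 -normr_eq0 eq_le normr_ge0.
  rewrite andbT; apply/ler_addgt0Pr => e e0.
  have [i approx] := dn_approx _ (divr_gt0 e0 (ltr0Sn _ 1)).
  have [_ dnC _] := dn_semi i.
  have := approx _ _ Pa Pb; have := approx _ _ Pb Pa; rewrite dnC //.
  rewrite add0r !ltr_norml ler_norml; lra.
- move=> a b c Pa Pb Pc; apply/ler_addgt0Pr => e e0.
  have [i approx] := dn_approx _ (divr_gt0 e0 (ltr0Sn _ 2)).
  have [_ _ dn_tri] := dn_semi i.
  have := dn_tri _ _ _ Pa Pb Pc; have := approx _ _ Pa Pb.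
  have := approx _ _ Pb Pc; have := approx _ _ Pa Pc; rewrite !ltr_norml; lra.
Qed.

Lemma eq_mul_approx (R : realFieldType) (k p q : R) : 0 < k ->
  (forall e, 0 < e -> exists a, `|k * a - p| < e /\ `|a - q| < e) -> p = k * q.
Proof.
move=> k_gt0 approx; apply/eqP; rewrite -subr_eq0 -normr_eq0 eq_le normr_ge0.
rewrite andbT; apply/ler_addgt0Pr => e e0; rewrite add0r.
have k1_gt0 : 0 < 1 + k by rewrite ltr_wpDr // ltW.
have [a []] := approx _ (divr_gt0 e0 k1_gt0).
rewrite !ltr_norml => /andP[h1 h2] /andP[h3 h4].
have eE : e / (1 + k) + k * (e / (1 + k)) = e.
  by rewrite -{1}[e / _]mul1r -mulrDl mulrC divfK // gt_eqF.
have h5 : k * (a - q) < k * (e / (1 + k)) by rewrite ltr_pM2l.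
have h6 : k * (- (e / (1 + k))) < k * (a - q) by rewrite ltr_pM2l.
rewrite mulrBr in h5 h6; rewrite mulrN in h6; rewrite ler_norml; lra.
Qed.

Lemma abs_filter_meet (G : topologicalType) (mu : set G -> bool) {O1 O2 : set G} :
  abs_filter mu -> open O1 -> open O2 -> mu O1 -> mu O2 ->
  exists eps, O1 eps /\ O2 eps.
Proof.
move=> [_ mu0 _ mu_mod] oO1 oO2 muO1 muO2.
have := mu_mod _ _ oO1 oO2; rewrite muO1 muO2.
case muI: (mu (O1 `&` O2)); last by case: (mu (O1 `|` O2)).
move=> _; have /set0P[eps [] ] : O1 `&` O2 != set0.
  by apply/negP => /eqP I0; move: mu0; rewrite -I0 muI.
by exists eps.
Qed.

Section TopGroup.
Variables (G : topologicalType) (mul : G -> G -> G) (one : G) (inv : G -> G).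
Hypothesis G_grp : comm_topgroup mul one inv.

Lemma image_mul_preimage g (W : set G) : mul (inv g) @` W = mul g @^-1` W.
Proof.
have [mulA mulC mul1 mulV _] := G_grp.
rewrite eqEsubset; split=> y.
  by move=> [z Wz <-] /=; rewrite mulA (mulC g) mulV mul1.
by move=> Wy; exists (mul g y) => //; rewrite mulA mulV mul1.
Qed.

Lemma open_mul_image g (W : set G) : open W -> open (mul (inv g) @` W).
Proof.
have [_ _ _ _ [mul_cont _]] := G_grp.
move=> oW; rewrite image_mul_preimage.
have mulg_cont : continuous (mul g).
  move=> y; apply: (continuous_comp (f := fun y => (g, y))) (mul_cont (g, y)).
  exact: cvg_pair (cvg_cst g) cvg_id.
by move/continuousP : mulg_cont; apply.
Qed.

(* Condition (iii) with g = lam^-1: eps can be taken along mu while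
   eps lam goes along mu'. *)
Lemma abs_transport_meet (Abs : set (set G -> bool)) mu lam :
  absolute mul Abs -> Abs mu -> exists mu', Abs mu' /\
    forall W1 W2 : set G, open W1 -> open W2 -> mu W1 -> mu' W2 ->
      exists eps, W1 eps /\ W2 (mul eps lam).
Proof.
have [mulA mulC mul1 mulV _] := G_grp.
move=> [filt _ _ transport] Amu.
have [mu' [Amu' mu'E]] := transport _ (inv lam) Amu.
exists mu'; split=> // W1 W2 oW1 oW2 muW1 mu'W2.
have oW2' : open (mul (inv lam) @` W2) by exact: open_mul_image.
have [eps [W1eps [z W2z zE]]] :=
  abs_filter_meet (filt _ Amu) oW1 oW2' muW1 (etrans (esym (mu'E _ oW2)) mu'W2).
by exists eps; split=> //; rewrite -zE mulC mulA (mulC lam) mulV mul1.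
Qed.

End TopGroup.

Lemma rescaled_dist_semimetric (R : realType) (G X : Type) (nrm : G -> R)
  (d : X -> X -> R) (delta : G -> X -> X -> X) (x : X) (P : set X) eps :
  0 < nrm eps -> semimetric_on setT d ->
  semimetric_on P (rescaled_dist nrm d delta x eps).
Proof.
move=> n_gt0 [d0 dC dtri]; rewrite /rescaled_dist.
split=> [a _|a b _ _|a b c _ _ _]; first by rewrite d0 // mul0r.
  by rewrite dC.
rewrite -mulrDl ler_wpM2r ?dtri //.
by rewrite invr_ge0 ltW.
Qed.

Lemma rescaled_dist_dilate (R : realType) (G X : Type) (mul : G -> G -> G)
  (nrm : G -> R) (d : X -> X -> R) (delta : G -> X -> X -> X) x eps lam u v :
  (forall a b, nrm (mul a b) = nrm a * nrm b) -> 0 < nrm eps -> 0 < nrm lam ->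
  (forall e m y z, delta e y (delta m y z) = delta (mul e m) y z) ->
  rescaled_dist nrm d delta x eps (delta lam x u) (delta lam x v) =
  nrm lam * rescaled_dist nrm d delta x (mul eps lam) u v.
Proof.
move=> nrmM eps_gt0 lam_gt0 deltaM; rewrite /rescaled_dist !deltaM nrmM.
by field; rewrite !gt_eqF.
Qed.

Section DilationStructure.
Variables (R : realType) (G : topologicalType)
  (mul : G -> G -> G) (one : G) (inv : G -> G)
  (Abs : set (set G -> bool)) (nrm : G -> R)
  (X : pseudoMetricType R) (d : X -> X -> R)
  (delta deltainv : G -> X -> X -> X) (A : R) (dx : X -> X -> X -> R).
Hypothesis dil : dilation_structure mul one inv Abs nrm d delta deltainv.
Hypothesis A2 : axiom_A2 Abs nrm d delta A dx.
Variable x : X.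

Local Notation ball_x := (cball d x A).
Local Notation dn := (rescaled_dist nrm d delta x).

Let nrm_gt0 : forall a, 0 < nrm a.
Proof. by case: dil => _ _ _ []. Qed.

Let Abs_filter : forall mu, Abs mu -> abs_filter mu.
Proof. by case: dil => _ _ []. Qed.

Lemma rescaled_dist_semimetric_ball eps : semimetric_on ball_x (dn eps).
Proof.
apply: rescaled_dist_semimetric; first exact: nrm_gt0.
have [_ _ _ _ [[d0 dC dtri _] _ _]] := dil.
by split=> [a _|a b _ _|a b c _ _ _]; [exact/d0 | exact: dC | exact: dtri].
Qed.

Lemma rescaled_dist_uniform_cvg mu : Abs mu -> forall e : R, 0 < e ->
  exists W : set G, [/\ open W, mu W &
    forall eps u v, W eps -> ball_x u -> ball_x v ->
      `|dn eps u v - dx x u v| < e].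
Proof.
have [_ A2_lim _] := A2; move=> Amu e e0.
have [W [oW muW approx]] := A2_lim mu Amu _ (@compact_set1 _ x) e e0.
by exists W; split=> // eps u v Weps; exact: approx.
Qed.

Lemma dx_semimetric : semimetric_on ball_x (dx x).
Proof.
have [_ _ [_ Abs_i _ _] _ _] := dil.
have [_ [mu [_ Amu _ _]]] := Abs_i one.
apply: semimetric_on_uniform_limit rescaled_dist_semimetric_ball _ => e e0.
have [W [oW muW approx]] := rescaled_dist_uniform_cvg Amu _ e0.
have [eps [Weps _]] := abs_filter_meet (Abs_filter Amu) oW oW muW muW.
by exists eps => u v; exact: approx.
Qed.

Lemma rescaled_dist_GH_cvg mu : Abs mu ->
  GH_converges mu ball_x dn ball_x (dx x).
Proof.
move=> Amu r r0; have e0 : 0 < r / 3 by rewrite divr_gt0.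
have [W [oW muW approx]] := rescaled_dist_uniform_cvg Amu _ e0.
exists W; split=> // eps Weps.
apply: (GH_dist_lt_close (r / 3) e0 (rescaled_dist_semimetric_ball eps)
  dx_semimetric).
  by move=> a b Pa Pb; exact/ltW/approx.
lra.
Qed.

Lemma dx_dilate lam u v : ball_x u -> ball_x v ->
  ball_x (delta lam x u) -> ball_x (delta lam x v) ->
  dx x (delta lam x u) (delta lam x v) = nrm lam * dx x u v.
Proof.
have [G_grp _ Abs_G [_ nrmM _] [_ _ [_ _ _ deltaM _]]] := dil.
have [_ Abs_i _ _] := Abs_G.
move=> Pu Pv Plu Plv; apply: eq_mul_approx => [|e e0]; first exact: nrm_gt0.
have [_ [mu [_ Amu _ _]]] := Abs_i lam.
have [mu' [Amu' meet]] := abs_transport_meet G_grp _ lam Abs_G Amu.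
have [W [oW muW approx]] := rescaled_dist_uniform_cvg Amu _ e0.
have [W' [oW' muW' approx']] := rescaled_dist_uniform_cvg Amu' _ e0.
have [eps [Weps W'eps]] := meet _ _ oW oW' muW muW'.
have dnE := rescaled_dist_dilate R mul nrm d delta x eps lam u v
  nrmM (nrm_gt0 eps) (nrm_gt0 lam) deltaM.
exists (dn (mul eps lam) u v); split; last exact: approx'.
by rewrite -dnE; exact: approx.
Qed.

End DilationStructure.

Theorem proposition6p11 (R : realType) (G : topologicalType)
  (mul : G -> G -> G) (one : G) (inv : G -> G)
  (Abs : set (set G -> bool)) (nrm : G -> R)
  (X : pseudoMetricType R) (d : X -> X -> R)
  (delta deltainv : G -> X -> X -> X) (A : R) (dx : X -> X -> X -> R) :
  dilation_structure mul one inv Abs nrm d delta deltainv ->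
  axiom_A2 Abs nrm d delta A dx ->
  forall x : X,
    (forall mu, Abs mu ->
       GH_converges mu (cball d x A) (rescaled_dist nrm d delta x)
                       (cball d x A) (dx x)) /\
    (forall (lam : G) (u v : X),
       cball d x A u -> cball d x A v ->
       cball d x A (delta lam x u) -> cball d x A (delta lam x v) ->
       dx x (delta lam x u) (delta lam x v) = nrm lam * dx x u v).
Proof.
move=> dil A2 x; split=> [mu Amu | lam u v].
- exact: rescaled_dist_GH_cvg dil A2 x mu Amu.
- exact: (dx_dilate dil A2 (x := x) lam).
Qed.
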